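(* Let $q$ be a prime power. For all positive integers $d,t$ with $d<q$ and $t+1<q$, an optimum $(d,t)$-CDA$((d+1)q^t;q+t-1,q)$ exists. Moreover, if $q\ge4$ is a power of $2$, then an optimum $(d,2)$-CDA$((d+1)q^2;2q+3,q)$ exists for every positive integer $d<q$.
   Context: Consecutive $t$-way interaction in an $N\times k$ array $A=(a_{ij})$ over a $v$-set $V$: $T=\{(i,x_i),\dots,(i+t-1,x_{i+t-1})\}$, $1\le i\le k-t+1$, $x_r\in V$; $\rho(A,T)=\{r: a_{r,j}=x_j\ \forall (j,x_j)\in T\}$, $\rho(A,\mathcal T)=\bigcup_{T\in\mathcal T}\rho(A,T)$. A $(d,t)$-CDA$(N;k,v)$ is an $N\times k$ array over $V$ in which every $t$ consecutive columns contain every $t$-tuple at least once, and such that for every set $\mathcal T$ of exactly $d$ distinct consecutive $t$-way interactions and every consecutive $t$-way interaction $T$: $\rho(A,T)\subseteq\rho(A,\mathcal T)$ iff $T\in\mathcal T$. It is optimum if $N=(d+1)v^t$. *)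

From mathcomp Require Import all_boot all_order all_algebra.
Set Implicit Arguments. Unset Strict Implicit. Unset Printing Implicit Defensive.

(* An N x k array over the v-set V = 'I_v is a matrix A : 'M['I_v]_(N, k).
   Rows, columns and symbols are 0-based. *)

(* A consecutive t-way interaction in an array with k columns:
   a starting column i (0-based, i.e. i <= k - t) together with the
   t-tuple (x_i, ..., x_{i+t-1}) of symbols it prescribes on columns
   i, ..., i+t-1. *)
Definition cinter (k t v : nat) : finType :=
  ('I_(k - t).+1 * (t.-tuple 'I_v))%type.

Definition rho (N k v t : nat) (A : 'M['I_v]_(N, k)) (T : cinter k t v)
  : {set 'I_N} :=
  [set r : 'I_N | [forall j : 'I_t, forall c : 'I_k,
      (val c == (val T.1 + val j)%N) ==> (A r c == tnth T.2 j)]].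

Definition rhoS (N k v t : nat) (A : 'M['I_v]_(N, k))
  (calT : {set cinter k t v}) : {set 'I_N} :=
  \bigcup_(T in calT) rho A T.

Definition isCDA (d t N k v : nat) (A : 'M['I_v]_(N, k)) : Prop :=
  (t <= k)%N /\
  (forall T : cinter k t v, rho A T != set0) /\
  (forall (calT : {set cinter k t v}) (T : cinter k t v),
      #|calT| = d ->
      (rho A T \subset rhoS A calT) <-> (T \in calT)).

Definition optimumCDA (d t N k v : nat) (A : 'M['I_v]_(N, k)) : Prop :=
  isCDA d t A /\ N = ((d + 1) * v ^ t)%N.

Definition prime_power (q : nat) : Prop :=
  exists p e : nat, prime p /\ (0 < e)%N /\ q = (p ^ e)%N.

(* Packing criterion (isCDA_of_packing): if every consecutive t-way interaction
   is covered by at least d+1 rows and two distinct interactions share at most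
   one row, the array is (d,t)-detecting.

   Construction: let F be a field with q elements.  The (d+1) q^t rows are the
   pairs (c, g) with c < d+1 and deg g < t, with row polynomial
   point(c) X^t + g, where point(c) is the c-th element of F; as d < q,
   distinct rows have distinct polynomials.  A column schedule assigns an index
   u <= q to each column, and the entry is the coordinate of the row polynomial
   at u: its value at the u-th element of F if u < q, its X-coefficient if
   u = q.  The criterion then follows (optimumCDA_of_schedule) once
   - every window of t consecutive columns admits every pattern of
     coordinates, for each leading coefficient (covering), and
   - polynomials of degree <= t agreeing on two distinct windows are equal
     (separation).

   First statement: the cyclic schedule c |-> c mod q on q+t-1 columns; a
   window reads t distinct points (interpolation) and two windows together
   read t+1.  Second statement (q = 2h, t = 2): the schedule
   0,1,...,q,0,2,...,q,1,3,...,q-1,0 on 2q+3 columns, whose windows are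
   pairwise distinct pairs of indices; three distinct coordinates determine a
   quadratic in characteristic 2, because p^2 - p'^2 = (p - p')^2 there. *)

From mathcomp Require Import all_boot all_order all_algebra.
From mathcomp Require Import zify ring finfield.
Set Implicit Arguments. Unset Strict Implicit. Unset Printing Implicit Defensive.

Lemma card_bigcup_le (T I : finType) (P : pred I) (F : I -> {set T}) :
  #|\bigcup_(i | P i) F i| <= \sum_(i | P i) #|F i|.
Proof.
elim/big_rec2: _ => [|i U s _ IH]; first by rewrite cards0.
exact: leq_trans (leq_card_setU _ _) (leq_add _ IH).
Qed.

(* Packing criterion: covering multiplicity > d and pairwise intersections of
   size <= 1 make an array (d,t)-detecting, since d sets rho(A,T') with T' <> T
   cover at most d rows of rho(A,T). *)
Lemma isCDA_of_packing (d t N k v : nat) (A : 'M['I_v]_(N, k)) :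
  t <= k ->
  (forall T : cinter k t v, d < #|rho A T|) ->
  (forall T T' : cinter k t v, T != T' -> #|rho A T :&: rho A T'| <= 1) ->
  isCDA d t A.
Proof.
move=> tk covered packed; split=> //; split=> [T|calT T card_calT].
  by rewrite -card_gt0 (leq_trans _ (covered T)).
split=> [sub_rho|TcalT]; last by rewrite /rhoS (bigcup_sup T TcalT).
apply: contraTT (covered T) => TncalT; rewrite -leqNgt.
have -> : rho A T = \bigcup_(T' in calT) (rho A T :&: rho A T').
  apply/setP => r; apply/idP/bigcupP => [rT | [T' _]]; last by case/setIP.
  have /bigcupP [T' T'calT rT'] := subsetP sub_rho r rT.
  by exists T' => //; rewrite inE rT.
rewrite -card_calT -[#|calT|]sum1_card; apply: leq_trans (card_bigcup_le _ _) _.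
by apply: leq_sum => T' T'calT; apply: packed; apply: contraNneq TncalT => ->.
Qed.

Section RowArrays.

Variables (X : finType) (k v t : nat) (f : X -> nat -> 'I_v).
Hypothesis t_le_k : t <= k.

Definition row_array : 'M['I_v]_(#|X|, k) := \matrix_(r, c) f (enum_val r) c.

Definition agree_on (x x' : X) (i : nat) : Prop :=
  forall j, j < t -> f x (i + j) = f x' (i + j).

Lemma mem_rho_row_array (T : cinter k t v) (r : 'I_#|X|) :
  reflect (forall j : 'I_t, f (enum_val r) (T.1 + j) = tnth T.2 j)
          (r \in rho row_array T).
Proof.
rewrite inE; apply: (iffP forallP) => [rT j | rT j].
  have col_lt : T.1 + j < k by have := ltn_ord T.1; have := ltn_ord j; lia.
  by have /forallP/(_ (Ordinal col_lt)) := rT j; rewrite eqxx mxE => /eqP.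
by apply/forallP => c; apply/implyP => /eqP c_eq; rewrite mxE c_eq rT.
Qed.

Lemma isCDA_row_array (d : nat) (cls : X -> 'I_d.+1) :
  (forall i (y : t.-tuple 'I_v) (c : 'I_d.+1), i <= k - t ->
     exists2 x, cls x = c & forall j : 'I_t, f x (i + j) = tnth y j) ->
  (forall x x' i i', i <= k - t -> i' <= k - t -> i != i' ->
     agree_on x x' i -> agree_on x x' i' -> x = x') ->
  isCDA d t row_array.
Proof.
move=> cover separate; apply: isCDA_of_packing => // [T | T T' neqTT'].
  have Ti : T.1 <= k - t := ltn_ord T.1.
  pose S := [set x | [forall j : 'I_t, f x (T.1 + j) == tnth T.2 j]].
  have cls_onto : cls @: S = [set: 'I_d.+1].
    apply/setP => c; rewrite inE; have [x cls_x x_T] := cover _ T.2 c Ti.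
    by apply/imsetP; exists x; rewrite // inE; apply/forallP => j; rewrite x_T.
  have S_rho : enum_rank @: S \subset rho row_array T.
    apply/subsetP => _ /imsetP [x + ->]; rewrite inE => /forallP x_T.
    by apply/mem_rho_row_array => j; rewrite enum_rankK; apply/eqP.
  have card_S : d < #|S| by rewrite -[d.+1]card_ord -cardsT -cls_onto leq_imset_card.
  by rewrite (leq_trans card_S) // -(card_imset _ enum_rank_inj) subset_leq_card.
apply/card_le1_eqP => r r' /setIP [/mem_rho_row_array rT /mem_rho_row_array rT'].
case/setIP => /mem_rho_row_array r'T /mem_rho_row_array r'T'.
have [eq_start | neq_start] := eqVneq T.1 T'.1.
  case/negP: neqTT'; apply/eqP/injective_projections => //.
  by apply: eq_from_tnth => j; rewrite -rT eq_start -rT'.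
apply: enum_val_inj; apply: (separate _ _ T.1 T'.1) => //.
- by rewrite -ltnS.
- by rewrite -ltnS.
- by move=> j jt; rewrite (rT (Ordinal jt)) (r'T (Ordinal jt)).
- by move=> j jt; rewrite (rT' (Ordinal jt)) (r'T' (Ordinal jt)).
Qed.

End RowArrays.

Definition cyclic_schedule (q c : nat) : nat := c %% q.

Lemma mod_window_inj (q m n1 n2 : nat) :
  m <= n1 < m + q -> m <= n2 < m + q -> n1 %% q = n2 %% q -> n1 = n2.
Proof.
wlog le12 : n1 n2 / n1 <= n2 => [sym|].
  by case/orP: (leq_total n1 n2) => le12 *; [|symmetry]; apply: sym.
move=> /andP [m_n1 _] /andP [_ n2_m] /eqP; rewrite eq_sym eqn_mod_dvd //.
have [diff0 | pos] := posnP (n2 - n1); first by lia.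
by move/(dvdn_leq pos); lia.
Qed.

(* Column schedule for q = 2h: indices 0,1,...,2h, 0,2,...,2h, 1,3,...,2h-1, 0
   on the columns 0, ..., 4h+2; index 2h stands for the X-coefficient. *)
Definition pair_schedule (h c : nat) : nat :=
  if c <= 2 * h then c
  else if c <= 3 * h + 1 then 2 * (c - 2 * h - 1)
  else if c <= 4 * h + 1 then 2 * (c - 3 * h - 1) - 1
  else 0.

Lemma pair_schedule_window (h w : nat) : 0 < h -> w <= 4 * h + 1 ->
  [/\ pair_schedule h w <= 2 * h, pair_schedule h w.+1 <= 2 * h
    & pair_schedule h w != pair_schedule h w.+1].
Proof. by move=> h_pos w_le; rewrite /pair_schedule; repeat case: ifP => ?; split; lia. Qed.

Lemma pair_schedule_new_point (h w w' : nat) :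
  1 < h -> w <= 4 * h + 1 -> w' <= 4 * h + 1 -> w != w' ->
  exists2 u, u \in [:: pair_schedule h w'; pair_schedule h w'.+1]
           & u \notin [:: pair_schedule h w; pair_schedule h w.+1].
Proof.
move=> h_gt1 w_le w'_le neq_w.
suff : (pair_schedule h w' \notin [:: pair_schedule h w; pair_schedule h w.+1]) ||
       (pair_schedule h w'.+1 \notin [:: pair_schedule h w; pair_schedule h w.+1]).
  by case/orP => new; [exists (pair_schedule h w') | exists (pair_schedule h w'.+1)];
     rewrite // !inE eqxx ?orbT.
rewrite !inE /pair_schedule; repeat case: ifP => ?; lia.
Qed.

Import GRing.Theory.
Local Open Scope ring_scope.

Lemma poly_eq_on (R : idomainType) (P Q : {poly R}) (zs : seq R) :
  uniq zs -> (size P <= size zs)%N -> (size Q <= size zs)%N ->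
  {in zs, forall z, P.[z] = Q.[z]} -> P = Q.
Proof.
move=> zs_uniq sP sQ PQ; apply/eqP; rewrite -subr_eq0; apply/eqP.
apply: (roots_geq_poly_eq0 _ zs_uniq).
  by apply/allP => z zs_z; rewrite /root !hornerE PQ ?subrr.
by rewrite (leq_trans (size_polyD _ _)) // size_polyN geq_max sP.
Qed.

Definition lead_poly (R : nzRingType) (t : nat) (a : R) (g : {poly_t R}) : {poly R} :=
  a *: 'X^t + val g.

Lemma size_lead_poly (R : nzRingType) (t : nat) (a : R) (g : {poly_t R}) :
  (size (lead_poly a g) <= t.+1)%N.
Proof.
rewrite (leq_trans (size_polyD _ _)) // geq_max.
rewrite (leq_trans (size_scale_leq _ _)) ?size_polyXn //.
exact: leq_trans (size_npoly g) _.
Qed.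

Lemma lead_poly_inj (R : nzRingType) (t : nat) (a a' : R) (g g' : {poly_t R}) :
  lead_poly a g = lead_poly a' g' -> a = a' /\ g = g'.
Proof.
move=> eq_lead; have eq_a : a = a'.
  have := congr1 (fun P : {poly R} => P`_t) eq_lead.
  by rewrite !coefD !coefZ !coefXn eqxx !big_coef_npoly // !mulr1 !addr0.
by split=> //; apply: val_inj; move: eq_lead; rewrite /lead_poly eq_a => /addrI.
Qed.

(* Interpolation with prescribed leading coefficient: at t distinct points the
   values of a X^t + g can be prescribed; evaluation is injective on the
   polynomials g of degree < t, hence onto by counting. *)
Lemma interpolate_lead (F : finFieldType) (t : nat) (a : F) (r : 'I_t -> F) :
  injective r -> forall y : 'I_t -> F,
  exists g : {poly_t F}, forall j, (lead_poly a g).[r j] = y j.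
Proof.
move=> r_inj y; pose ev (g : {poly_t F}) := [ffun j => (lead_poly a g).[r j]].
have ev_inj : injective ev.
  move=> g g' /ffunP ev_eq; apply: val_inj.
  have size_pts : size (map r (enum 'I_t)) = t by rewrite size_map size_enum_ord.
  apply: (@poly_eq_on _ _ _ (map r (enum 'I_t))); rewrite ?size_pts ?size_npoly //.
  - by rewrite map_inj_uniq ?enum_uniq.
  - by move=> _ /mapP [j _ ->]; move: (ev_eq j); rewrite !ffunE !hornerD => /addrI.
have card_ev : (#|{ffun 'I_t -> F}| <= #|{poly_t F}|)%N.
  by rewrite card_ffun card_npoly card_ord.
have /codomP [g /ffunP ev_g] := inj_card_onto ev_inj card_ev (finfun y).
by exists g => j; have := ev_g j; rewrite !ffunE.
Qed.

Lemma char2_quadratic_eq (F : fieldType) (P Q : {poly F}) (p p' : F) :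
  (2%N \in [pchar F]) -> (size P <= 3)%N -> (size Q <= 3)%N -> P`_1 = Q`_1 ->
  p != p' -> P.[p] = Q.[p] -> P.[p'] = Q.[p'] -> P = Q.
Proof.
move=> char2 sP sQ PQ1 neq_p PQp PQp'; apply/eqP; rewrite -subr_eq0; apply/eqP.
set R := P - Q.
have sR : (size R <= 3)%N.
  by rewrite (leq_trans (size_polyD _ _)) // size_polyN geq_max sP.
have R1 : R`_1 = 0 by rewrite coefB PQ1 subrr.
have R_eval x : R.[x] = R`_0 + R`_2 * x ^+ 2.
  by rewrite (horner_coef_wide _ sR) !big_ord_recr big_ord0 /= R1; ring.
have Rp0 : R.[p] = 0 by rewrite hornerD hornerN PQp subrr.
have Rp'0 : R.[p'] = 0 by rewrite hornerD hornerN PQp' subrr.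
have two0 : 2%:R = 0 :> F := pcharf0 char2.
have R2 : R`_2 = 0.
  have : R`_2 * (p - p') ^+ 2 = 0.
    transitivity (R.[p] - R.[p'] - 2%:R * R`_2 * (p * p' - p' ^+ 2)).
      by rewrite !R_eval; ring.
    by rewrite Rp0 Rp'0 two0 !mul0r !subr0.
  by move/eqP; rewrite mulf_eq0 expf_eq0 subr_eq0 (negPf neq_p) orbF => /eqP.
have R0 : R`_0 = 0 by move: Rp0; rewrite R_eval R2 mul0r addr0.
apply/polyP => -[|[|[|i]]]; rewrite ?coef0 //; exact: nth_default (leq_trans sR _).
Qed.

Section Coordinates.

Variable F : finFieldType.

Definition point (n : nat) : F := nth 0 (enum F) n.

Lemma point_inj (m n : nat) : (m < #|F|)%N -> (n < #|F|)%N -> point m = point n -> m = n.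
Proof. by move=> mF nF /eqP; rewrite nth_uniq ?enum_uniq -?cardE // => /eqP. Qed.

Definition coord (P : {poly F}) (u : nat) : F :=
  if (u < #|F|)%N then P.[point u] else P`_1.

Lemma coord_point (P : {poly F}) (u : nat) : (u < #|F|)%N -> coord P u = P.[point u].
Proof. by rewrite /coord => ->. Qed.

Lemma coord_top (P : {poly F}) : coord P #|F| = P`_1.
Proof. by rewrite /coord ltnn. Qed.

(* Any two distinct coordinates of a X^2 + g, with g of degree < 2, can be
   prescribed: by interpolation when both are points, and by choosing the
   X-coefficient first when one of them is the extra index. *)
Lemma coord_pair_cover (u u' : nat) (a y y' : F) :
  u != u' -> (u <= #|F|)%N -> (u' <= #|F|)%N ->
  exists g : {poly_2 F}, coord (lead_poly a g) u = y /\ coord (lead_poly a g) u' = y'.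
Proof.
wlog u'_lt : u u' y y' / (u' < #|F|)%N => [sym neq_u u_le u'_le | neq_u u_le _].
  have [u'_lt | u'_ge] := ltnP u' #|F|; first exact: sym.
  have u_lt : (u < #|F|)%N by lia.
  have neq_u' : u' != u by rewrite eq_sym.
  by have [g [g_u' g_u]] := sym u' u y' y u_lt neq_u' u'_le u_le; exists g.
have [u_lt | u_ge] := ltnP u #|F|.
  pose us := [:: u; u']; pose r (j : 'I_2) := point (nth 0%N us j).
  have us_lt (j : 'I_2) : (nth 0%N us j < #|F|)%N by case: j => [[|[|]]].
  have r_inj : injective r.
    move=> j j' /point_inj eq_nth; apply/val_inj/eqP.
    rewrite -(@nth_uniq _ 0%N us) ?(eq_nth (us_lt j) (us_lt j')) ?eqxx //.
    - exact: ltn_ord.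
    - exact: ltn_ord.
    - by rewrite /= inE neq_u.
  have [g g_y] := interpolate_lead a r_inj (fun j => nth 0 [:: y; y'] j).
  by exists g; rewrite !coord_point //; split; [exact: (g_y ord0) | exact: (g_y ord_max)].
have -> : u = #|F| by apply/eqP; rewrite eqn_leq u_le u_ge.
pose B := (y' - y * point u' - a * point u' ^+ 2)%:P + y *: 'X.
have size_B : (size B <= 2)%N.
  rewrite (leq_trans (size_polyD _ _)) // geq_max size_polyC (leq_trans (leq_b1 _)) //.
  by rewrite (leq_trans (size_scale_leq _ _)) ?size_polyX.
exists (npolyp 2 B); rewrite coord_top coord_point // /lead_poly [val _]npolypK //.
split; first by rewrite coefD coefZ coefXn coefD coefC coefZ coefX /=; ring.
by rewrite hornerD hornerZ hornerXn hornerD hornerC hornerZ hornerX; ring.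
Qed.

(* In characteristic 2, three distinct coordinates determine a polynomial of
   degree <= 2: either they are three points, or the X-coefficient and two
   points (char2_quadratic_eq). *)
Lemma coords_determine (P Q : {poly F}) (us : seq nat) :
  (2%N \in [pchar F]) -> (size P <= 3)%N -> (size Q <= 3)%N ->
  uniq us -> size us = 3%N -> all (fun u => u <= #|F|)%N us ->
  {in us, forall u, coord P u = coord Q u} -> P = Q.
Proof.
move=> char2 sP sQ us_uniq size_us us_le PQ.
have [top_us | fin_us] := boolP (#|F| \in us); last first.
  have us_lt u : u \in us -> (u < #|F|)%N.
    move=> us_u; rewrite ltn_neqAle (allP us_le _ us_u) andbT.
    by apply: contraNneq fin_us => <-.
  apply: (@poly_eq_on _ _ _ (map point us)); rewrite ?size_map ?size_us //.
    by rewrite map_inj_in_uniq // => u u' /us_lt u_lt /us_lt u'_lt; apply: point_inj.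
  by move=> _ /mapP [u us_u ->]; rewrite -!coord_point ?us_lt ?PQ.
have rem_lt v : v \in rem #|F| us -> (v < #|F|)%N.
  rewrite (mem_rem_uniq _ us_uniq) inE => /andP [neq_v /(allP us_le)].
  by rewrite leq_eqVlt (negPf neq_v).
have rem_agree v : v \in rem #|F| us -> P.[point v] = Q.[point v].
  by move=> rem_v; rewrite -!coord_point ?rem_lt // PQ // (mem_rem rem_v).
have PQ1 : P`_1 = Q`_1 by rewrite -!coord_top PQ.
move: (rem_uniq #|F| us_uniq) (size_rem top_us) rem_lt rem_agree.
case: (rem #|F| us) => [|v [|v' []]]; rewrite size_us //= inE andbT => neq_v _ lt agree.
apply: (char2_quadratic_eq char2 sP sQ PQ1 (p := point v) (p' := point v'));
  rewrite ?agree ?inE ?eqxx ?orbT //.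
by apply: contra neq_v => /eqP /point_inj -> //; rewrite ?lt ?inE ?eqxx ?orbT.
Qed.

End Coordinates.

Section ScheduledRows.

Variables (F : finFieldType) (d t k : nat) (sched : nat -> nat).

Definition Row : finType := ('I_d.+1 * {poly_t F})%type.

Definition row_poly (x : Row) : {poly F} := lead_poly (point F x.1) x.2.

Lemma card_Row : #|Row| = ((d + 1) * #|F| ^ t)%N.
Proof. by rewrite card_prod card_ord card_npoly addn1. Qed.

Lemma row_poly_inj : (d < #|F|)%N -> injective row_poly.
Proof.
move=> dF [c g] [c' g'] /lead_poly_inj /= [/point_inj eq_c ->].
have ltF (b : 'I_d.+1) : (b < #|F|)%N by exact: leq_trans (ltn_ord b) dF.
by rewrite (val_inj (eq_c (ltF c) (ltF c'))).
Qed.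

Definition schedule_row (x : Row) (c : nat) : 'I_#|F| :=
  enum_rank (coord (row_poly x) (sched c)).

Definition agree_window (P Q : {poly F}) (i : nat) : Prop :=
  forall j, (j < t)%N -> coord P (sched (i + j)) = coord Q (sched (i + j)).

Lemma agree_window_at (P Q : {poly F}) (i c : nat) :
  agree_window P Q i -> (i <= c < i + t)%N -> coord P (sched c) = coord Q (sched c).
Proof. by move=> agree /andP [ic ci]; rewrite -(subnKC ic) agree // ltn_subLR. Qed.

Definition schedule_covers : Prop :=
  forall i, (i <= k - t)%N -> forall (a : F) (y : 'I_t -> F),
  exists g : {poly_t F}, forall j : 'I_t, coord (lead_poly a g) (sched (i + j)) = y j.

Definition schedule_separates : Prop :=
  forall (P Q : {poly F}) (i i' : nat), (size P <= t.+1)%N -> (size Q <= t.+1)%N ->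
  (i <= k - t)%N -> (i' <= k - t)%N -> i != i' ->
  agree_window P Q i -> agree_window P Q i' -> P = Q.

Lemma optimumCDA_of_schedule :
  (d < #|F|)%N -> (t <= k)%N -> schedule_covers -> schedule_separates ->
  exists A : 'M['I_#|F|]_((d + 1) * #|F| ^ t, k), optimumCDA d t A.
Proof.
move=> dF tk covers separates; rewrite -card_Row.
exists (row_array k schedule_row); split; last exact: card_Row.
apply: isCDA_row_array (fun x : Row => x.1) _ _ => //.
  move=> i y c ik; have [g g_y] := covers i ik (point F c) (fun j => enum_val (tnth y j)).
  by exists (c, g) => // j; rewrite /schedule_row /row_poly g_y enum_valK.
move=> x x' i i' ik i'k neq_i agree agree'.
apply: (row_poly_inj dF); apply: (separates _ _ i i') => //; try exact: size_lead_poly.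
  by move=> j jt; apply: enum_rank_inj; exact: agree.
by move=> j jt; apply: enum_rank_inj; exact: agree'.
Qed.

End ScheduledRows.

Section CyclicSchedule.

Variables (F : finFieldType) (t : nat).
Hypothesis t_lt_F : (t < #|F|)%N.

Let cyclic := cyclic_schedule #|F|.

Lemma coord_cyclic (P : {poly F}) (c : nat) : coord P (cyclic c) = P.[point F (cyclic c)].
Proof. by rewrite coord_point // ltn_pmod // (leq_ltn_trans _ t_lt_F). Qed.

Lemma cyclic_point_inj (m c c' : nat) : (m <= c < m + #|F|)%N -> (m <= c' < m + #|F|)%N ->
  point F (cyclic c) = point F (cyclic c') -> c = c'.
Proof.
move=> mc mc' /point_inj eq_pt; apply: mod_window_inj mc mc' _.
by apply: eq_pt; rewrite ltn_pmod // (leq_ltn_trans _ t_lt_F).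
Qed.

(* The t points of a window are distinct, so interpolation applies. *)
Lemma cyclic_schedule_covers : schedule_covers F t (#|F| + t - 1) cyclic.
Proof.
move=> i ik a y; pose r (j : 'I_t) := point F (cyclic (i + j)).
have in_window (j : 'I_t) : (i <= i + j < i + #|F|)%N.
  by rewrite leq_addr ltn_add2l (ltn_trans (ltn_ord j)).
have r_inj : injective r.
  by move=> j j' /(cyclic_point_inj (in_window j) (in_window j')) /addnI /val_inj.
have [g g_y] := interpolate_lead a r_inj y.
by exists g => j; rewrite coord_cyclic g_y.
Qed.

(* For windows i < i', the columns i, ..., i+t-1 and max(i', i+t) lie in a
   range of fewer than q columns, giving t+1 distinct points of agreement. *)
Lemma cyclic_schedule_separates : (0 < t)%N -> schedule_separates F t (#|F| + t - 1) cyclic.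
Proof.
move=> t_pos P Q i i' sP sQ.
wlog lt_ii' : i i' / (i < i')%N => [sym ik i'k neq agree agree' | ik i'k _ agree agree'].
  have [lt | gt | eq] := ltngtP i i'; first exact: (sym i i').
    by apply: (sym i' i); rewrite // eq_sym.
  by rewrite eq eqxx in neq.
pose last_col := maxn i' (i + t); pose cols := last_col :: iota i t.
have cols_window c : c \in cols -> (i <= c < i + #|F|)%N.
  by rewrite inE mem_iota => /orP [/eqP -> | ]; lia.
have cols_agree c : c \in cols -> coord P (cyclic c) = coord Q (cyclic c).
  rewrite inE mem_iota => /orP [/eqP -> | ic]; last exact: agree_window_at agree ic.
  by apply: agree_window_at agree' _; rewrite /last_col; lia.
apply: (@poly_eq_on _ _ _ [seq point F (cyclic c) | c <- cols]).
- rewrite map_inj_in_uniq /= ?mem_iota ?iota_uniq ?andbT; first by lia.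
  by move=> c c' cc cc'; apply: cyclic_point_inj (cols_window c cc) (cols_window c' cc').
- by rewrite size_map /= size_iota.
- by rewrite size_map /= size_iota.
- by move=> _ /mapP [c cc ->]; rewrite -!coord_cyclic cols_agree.
Qed.

End CyclicSchedule.

Lemma ord2P (j : 'I_2) : j = ord0 \/ j = ord_max.
Proof. by case: j => [[|[|]]] // j_lt; [left | right]; apply: val_inj. Qed.

Section PairSchedule.

Variables (F : finFieldType) (h : nat).
Hypotheses (char2 : 2%N \in [pchar F]) (card_F : #|F| = (2 * h)%N) (h_gt1 : (1 < h)%N).

Let pairs := pair_schedule h.

Lemma pair_window_le (w : nat) : (w <= 2 * #|F| + 3 - 2)%N ->
  [/\ (pairs w <= #|F|)%N, (pairs w.+1 <= #|F|)%N & pairs w != pairs w.+1].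
Proof.
rewrite card_F => w_le; apply: pair_schedule_window; first exact: ltnW.
by move: w_le; lia.
Qed.

Lemma pair_schedule_covers : schedule_covers F 2 (2 * #|F| + 3) pairs.
Proof.
move=> w w_le a y; have [u_le u'_le neq_u] := pair_window_le w_le.
have [g [g_u g_u']] := coord_pair_cover a (y ord0) (y ord_max) neq_u u_le u'_le.
by exists g => j; case: (ord2P j) => ->; rewrite /= ?addn0 ?addn1.
Qed.

(* Two distinct windows read three distinct indices, which determine a
   polynomial of degree <= 2 in characteristic 2. *)
Lemma pair_schedule_separates : schedule_separates F 2 (2 * #|F| + 3) pairs.
Proof.
move=> P Q w w' sP sQ w_le w'_le neq_w agree agree'.
have [u_le u'_le neq_u] := pair_window_le w_le.
have [v_le v'_le _] := pair_window_le w'_le.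
have [z z_w' z_w] : exists2 z, z \in [:: pairs w'; pairs w'.+1]
                                & z \notin [:: pairs w; pairs w.+1].
  by apply: pair_schedule_new_point => //; move: w_le w'_le; rewrite card_F; lia.
have window_agree wv : agree_window 2 pairs P Q wv ->
    {in [:: pairs wv; pairs wv.+1], forall u, coord P u = coord Q u}.
  by move=> agree_wv u; rewrite !inE => /orP [] /eqP ->;
     [rewrite -[wv]addn0 | rewrite -addn1]; apply: agree_wv.
apply: (coords_determine (us := [:: pairs w; pairs w.+1; z])) => //.
- move: z_w; rewrite /= !inE !negb_or andbT => /andP [z_u z_u'].
  by rewrite neq_u eq_sym z_u eq_sym z_u'.
- by rewrite /= u_le u'_le andbT; move: z_w'; rewrite !inE => /orP [] /eqP ->.
- move=> u; rewrite !inE => /or3P [] /eqP ->; last exact: window_agree _ agree' _ z_w'.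
  + by apply: (window_agree w agree (pairs w)); rewrite inE eqxx.
  + by apply: (window_agree w agree (pairs w.+1)); rewrite !inE eqxx orbT.
Qed.

End PairSchedule.

Local Close Scope ring_scope.

Theorem mainTheorem9 (q : nat) (hq : prime_power q) :
  (forall d t : nat, (0 < d)%N -> (0 < t)%N -> (d < q)%N -> (t.+1 < q)%N ->
     exists A : 'M['I_q]_((d + 1) * q ^ t, q + t - 1),
       optimumCDA d t A) /\
  ((exists e : nat, q = (2 ^ e)%N) -> (4 <= q)%N ->
     forall d : nat, (0 < d)%N -> (d < q)%N ->
     exists A : 'M['I_q]_((d + 1) * q ^ 2, 2 * q + 3),
       optimumCDA d 2 A).
Proof.
split=> [d t _ t_pos d_lt t_lt | [e q_eq] q_ge4 d _ d_lt].
  have [p [e [p_prime [e_pos q_eq]]]] : prime_power q := hq.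
  have [F _ card_F] := pPrimePowerField p_prime e_pos.
  rewrite -q_eq in card_F; rewrite -card_F in d_lt t_lt *.
  apply: (optimumCDA_of_schedule (sched := cyclic_schedule #|F|)) => //; first by lia.
    exact: cyclic_schedule_covers (ltnW t_lt).
  exact: cyclic_schedule_separates (ltnW t_lt) t_pos.
have e_gt1 : 1 < e by move: q_ge4; rewrite q_eq -[4]/(2 ^ 2) leq_exp2l.
have [F char2 card_F] := @pPrimePowerField 2 e isT (ltnW e_gt1).
rewrite -q_eq in card_F; rewrite -card_F in d_lt *.
have card_F_half : #|F| = 2 * 2 ^ e.-1 by rewrite card_F q_eq -expnS prednK // ltnW.
have h_gt1 : 1 < 2 ^ e.-1 by rewrite -[1]/(2 ^ 0) ltn_exp2l //; lia.
apply: (optimumCDA_of_schedule (sched := pair_schedule (2 ^ e.-1))) => //; first by lia.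
  exact: pair_schedule_covers.
exact: pair_schedule_separates.
Qed.
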